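(* Let $A$ and $B$ be finite commutative groups. Fix any isomorphism $\psi:\mathbb{Z}_{q_1}\times\cdots\times\mathbb{Z}_{q_n}\to A$ with positive integers $q_1,\dots,q_n$, and call a map $f:A\to B$ polyfractal if there is a $B$-polyfract $P$ in $X_1,\dots,X_n$ with $P(x)=f(\psi(x_1+q_1\mathbb{Z},\dots,x_n+q_n\mathbb{Z}))$ for all $x\in\mathbb{Z}^n$. Then $$\{f\in B^A : f\text{ is polyfractal}\}=\prod_{p\ \text{prime}}B_p^{A_p},$$ where $A_p$ and $B_p$ are the $p$-primary components of $A$ and $B$, and $\prod_p B_p^{A_p}$ denotes the set of maps $A=\prod_p A_p\to B=\prod_p B_p$ of the form $(a_p)_p\mapsto (f_p(a_p))_p$ with arbitrary $f_p:A_p\to B_p$. In particular this set does not depend on the chosen cyclic decomposition $\psi$.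
   Context: Notation: $\mathbb{Z}_r=\mathbb{Z}/r\mathbb{Z}$. For $\delta\in\mathbb{N}$, $\binom{X}{\delta}=X(X-1)\cdots(X-\delta+1)/\delta!$, $\binom{X}{0}=1$. For a finitely generated commutative group $B$, a $B$-polyfract in $X_1,\dots,X_n$ is a formal finite sum $P=\sum_{\delta\in\mathbb{N}^n}P_\delta\prod_{j=1}^n\binom{X_j}{\delta_j}$ with $P_\delta\in B$, evaluated at $x\in\mathbb{Z}^n$ by $P(x)=\sum_\delta\big(\prod_j\binom{x_j}{\delta_j}\big)P_\delta\in B$. *)

From HB Require Import structures.
From mathcomp Require Import all_boot all_order all_algebra.
Set Implicit Arguments. Unset Strict Implicit. Unset Printing Implicit Defensive.
Import Order.TTheory GRing.Theory Num.Theory.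
Local Open Scope ring_scope.

(* Z_{q_1} x ... x Z_{q_n}, with q_i = (q i).+1 (positive integers). *)
Definition Zprod (n : nat) (q : 'I_n -> nat) : finType :=
  {dffun forall i : 'I_n, 'I_(q i).+1}.

Definition Zprod_add (n : nat) (q : 'I_n -> nat) (u v : Zprod q) : Zprod q :=
  finfun (fun i => (u i + v i : 'I_(q i).+1)).

Definition Zred (k : nat) (z : int) : 'I_k.+1 :=
  inZp (`|(z %% (k.+1)%:Z)%Z|)%N.
Definition Zprod_red (n : nat) (q : 'I_n -> nat) (x : 'I_n -> int) : Zprod q :=
  finfun (fun i => Zred (q i) (x i)).

Definition is_group_iso (A : zmodType) (n : nat) (q : 'I_n -> nat)
  (psi : Zprod q -> A) : Prop :=
  bijective psi /\ forall u v, psi (Zprod_add u v) = psi u + psi v.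

Definition binz (x : int) (d : nat) : int :=
  ((\prod_(i < d) (x - i%:Z)) %/ (d`!)%:Z)%Z.

(* A B-polyfract in X_1..X_n: formal finite sum  sum_delta P_delta prod_j binom(X_j, delta_j),
   given as a finite list of pairs (delta, P_delta). *)
Definition polyfract (B : zmodType) (n : nat) := seq ({ffun 'I_n -> nat} * B).

Definition pf_eval (B : zmodType) (n : nat) (P : polyfract B n) (x : 'I_n -> int) : B :=
  \sum_(t <- P) t.2 *~ (\prod_(j < n) binz (x j) (t.1 j)).

Definition polyfractal (A B : zmodType) (n : nat) (q : 'I_n -> nat)
  (psi : Zprod q -> A) (f : A -> B) : Prop :=
  exists P : polyfract B n, forall x : 'I_n -> int,
    pf_eval P x = f (psi (Zprod_red q x)).

Definition primary (G : zmodType) (p : nat) (a : G) : Prop :=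
  exists k : nat, a *+ (p ^ k) = 0.

(* f lies in prod_p B_p^{A_p}: f((a_p)_p) = (f_p(a_p))_p for some f_p : A_p -> B_p,
   using A = (+)_p A_p, B = (+)_p B_p (only primes dividing |A||B| contribute). *)
Definition primary_product_map (A B : finZmodType) (f : A -> B) : Prop :=
  exists F : nat -> A -> B,
    (forall p a, prime p -> primary p a -> primary p (F p a)) /\
    (forall a : nat -> A, (forall p, prime p -> primary p (a p)) ->
       f (\sum_(p <- primes (#|A| * #|B|)) a p)
       = \sum_(p <- primes (#|A| * #|B|)) F p (a p)).

From HB Require Import structures.
From mathcomp Require Import all_boot all_order all_algebra fingroup cyclic.
From mathcomp Require Import zify ring.
Set Implicit Arguments. Unset Strict Implicit. Unset Printing Implicit Defensive.
Import Order.TTheory GRing.Theory Num.Theory.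
Local Open Scope ring_scope.

(* Let N = |A| |B| and, for a prime r, let e_r be the Chinese-remainder
   idempotent (e_r = 1 mod N_r, e_r = 0 mod N_r'); on a group killed by N,
   multiplication by e_r projects onto the r-primary component.  Both sides
   of the theorem are shown equivalent to the condition [primary_local f]:
   for every prime r | N, e_r f(u + t) = e_r f(u) whenever N_r' t = 0.

   Then polyfractal -> local (continuity, and N_r' is invertible mod r^M),
   local -> polyfractal (f = sum_r e_r f with each e_r f periodic torsion),
   and local <-> product map (bookkeeping with the e_r). *)

Lemma int_ind_shift (P : int -> Prop) :
  P 0 -> (forall x, P (x + 1) <-> P x) -> forall x, P x.
Proof.
move=> P0 PS; elim/int_rect => [//|k Pk|k Pk].
  have -> : Posz k.+1 = k%:Z + 1 by lia.
  exact/PS.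
by apply/PS; have -> : - (k.+1%:Z) + 1 = - k%:Z by lia.
Qed.

Definition ffactz (x : int) (d : nat) : int := \prod_(i < d) (x - i%:Z).

Lemma ffactzSl x d : ffactz (x + 1) d.+1 = (x + 1) * ffactz x d.
Proof.
rewrite /ffactz big_ord_recl subr0; congr (_ * _); apply: eq_bigr => i _.
rewrite lift0; lia.
Qed.

Lemma ffactzSr x d : ffactz x d.+1 = ffactz x d * (x - d%:Z).
Proof. by rewrite /ffactz big_ord_recr. Qed.

Lemma ffactz_shift x d : ffactz (x + 1) d.+1 = ffactz x d.+1 + d.+1%:Z * ffactz x d.
Proof. rewrite ffactzSl ffactzSr; ring. Qed.

Lemma ffactz0S d : ffactz 0 d.+1 = 0.
Proof. by rewrite /ffactz big_ord_recl subr0 mul0r. Qed.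

(* d! divides every falling factorial of length d, so binz is an exact quotient. *)
Lemma dvdz_fact_ffactz d x : ((d`!)%:Z %| ffactz x d)%Z.
Proof.
elim: d x => [|d IH] x; first by rewrite fact0 dvd1z.
elim/int_ind_shift: x => [|x]; first by rewrite ffactz0S dvdz0.
by rewrite ffactz_shift rpredDr // factS PoszM dvdz_mul.
Qed.

Lemma binzE x d : binz x d * (d`!)%:Z = ffactz x d.
Proof. by rewrite /binz divzK // dvdz_fact_ffactz. Qed.

Lemma binz0 x : binz x 0 = 1.
Proof. by rewrite /binz big_ord0 fact0 divz1. Qed.

Lemma binz0S d : binz 0 d.+1 = 0.
Proof. by rewrite /binz -/(ffactz 0 d.+1) ffactz0S div0z. Qed.

Lemma binzS x d : binz (x + 1) d.+1 = binz x d.+1 + binz x d.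
Proof.
have fact_neq0 : (d.+1`!)%:Z != 0 by rewrite eqz_nat -lt0n fact_gt0.
apply: (mulIf fact_neq0); rewrite mulrDl !binzE ffactz_shift -(binzE x d).
rewrite factS PoszM; ring.
Qed.

Lemma binz_nat (m d : nat) : binz m%:Z d = 'C(m, d)%:Z.
Proof.
elim: m d => [|m IH] [|d]; rewrite ?binz0 ?binz0S ?bin0 ?bin0n //.
have -> : Posz m.+1 = m%:Z + 1 by lia.
by rewrite binzS !IH binS PoszD addrC.
Qed.

(* v_p(C(p^b, i)) >= b - v_p(i) for 0 < i <= p^b, which follows from
   i C(p^b, i) = p^b C(p^b - 1, i - 1). *)
Lemma pfactor_dvdn_bin p b i : prime p -> (0 < i)%N -> (i <= p ^ b)%N ->
  (p ^ (b - logn p i) %| 'C(p ^ b, i))%N.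
Proof.
move=> pp i_gt0 le_i_pb; have Cgt0 : (0 < 'C(p ^ b, i))%N by rewrite bin_gt0.
have : (p ^ b %| i * 'C(p ^ b, i))%N.
  by case: i i_gt0 {le_i_pb Cgt0} => // i _; rewrite -mul_bin_diag dvdn_mulr.
rewrite pfactor_dvdn ?muln_gt0 ?i_gt0 // lognM // => le_b_log.
apply: dvdn_trans (pfactor_dvdnn p _); apply: dvdn_exp2l; lia.
Qed.

Lemma prime_dvd_bin_pow p m i : prime p -> (0 < i < p ^ m)%N -> (p %| 'C(p ^ m, i))%N.
Proof.
move=> pp /andP[i_gt0 lt_i_pm]; apply: dvdn_trans (pfactor_dvdn_bin pp i_gt0 (ltnW lt_i_pm)).
have lt_log_m : (logn p i < m)%N.
  rewrite -(ltn_exp2l _ _ (prime_gt1 pp)); apply: leq_ltn_trans lt_i_pm.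
  exact: dvdn_leq i_gt0 (pfactor_dvdnn p i).
by rewrite -{1}(expn1 p) dvdn_exp2l // subn_gt0.
Qed.

Lemma binz_shift_cong p k D d x : prime p -> (d <= D)%N ->
  ((p ^ k)%:Z %| binz (x + (p ^ (k + D))%:Z) d - binz x d)%Z.
Proof.
move=> pp; elim: d x => [|d IH] x le_dD; first by rewrite !binz0 subrr dvdz0.
set T := (p ^ (k + D))%:Z; elim/int_ind_shift: x => [|x].
  rewrite add0r binz_nat binz0S subr0 dvdzE.
  apply: dvdn_trans (pfactor_dvdn_bin pp _ _) => //.
    by apply: dvdn_exp2l; have := ltn_logl p (ltn0Sn d); lia.
  apply: leq_trans (ltnW (ltn_expl _ (prime_gt1 pp))); lia.
have -> : binz (x + 1 + T) d.+1 - binz (x + 1) d.+1 =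
   (binz (x + T) d.+1 - binz x d.+1) + (binz (x + T) d - binz x d).
  by rewrite addrAC !binzS; ring.
by rewrite rpredDr // IH // ltnW.
Qed.

Lemma binz_cong p k D d x y : prime p -> (d <= D)%N ->
  ((p ^ (k + D))%:Z %| x - y)%Z -> ((p ^ k)%:Z %| binz x d - binz y d)%Z.
Proof.
move=> pp le_dD /dvdzP [z]; set T := (p ^ (k + D))%:Z => Exy.
have -> : x = y + z * T by rewrite -Exy; ring.
elim/int_ind_shift: z {Exy} => [|z]; first by rewrite mul0r addr0 subrr dvdz0.
have -> : binz (y + (z + 1) * T) d - binz y d =
    (binz ((y + z * T) + T) d - binz (y + z * T) d) + (binz (y + z * T) d - binz y d).
  by rewrite mulrDl mul1r addrA; ring.
by rewrite rpredDl // binz_shift_cong.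
Qed.

Definition fdiff (g : int -> int) : int -> int := fun x => g (x + 1) - g x.

Lemma sum_bin_pascal (a : nat -> int) n S : (n < S)%N ->
  \sum_(0 <= d < S.+1) 'C(n, d)%:Z * (a d + a d.+1) =
  \sum_(0 <= d < S.+1) 'C(n.+1, d)%:Z * a d.
Proof.
move=> lt_nS; under eq_bigr do rewrite mulrDr.
rewrite big_split /= big_nat_recl // [X in _ + X = _]big_nat_recr //= (@bin_small n S) //.
rewrite big_nat_recl //; under [in RHS]eq_bigr do rewrite binS PoszD mulrDl.
rewrite big_split /= !bin0; ring.
Qed.

Lemma newton_forward n S g x : (n < S)%N ->
  g (x + n%:Z) = \sum_(0 <= d < S) 'C(n, d)%:Z * iter d fdiff g x.
Proof.
elim: n S x => [|n IH] [|S] x // lt_nS.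
  rewrite big_nat_recl // bin0 /= addr0 mul1r.
  by rewrite big1 ?addr0 // => d _; rewrite bin0n mul0r.
have -> : x + n.+1%:Z = (x + 1) + n%:Z by lia.
rewrite (IH S.+1) 1?ltnW // -sum_bin_pascal //; apply: eq_bigr => d _.
by rewrite [iter d.+1 _ _ _]/= /fdiff; congr (_ * _); ring.
Qed.

Definition periodic (T : nat) (g : int -> int) := forall x, g (x + T%:Z) = g x.

Lemma periodic_fdiff T g d : periodic T g -> periodic T (iter d fdiff g).
Proof.
move=> perg; elim: d => //= d IH x; rewrite /fdiff.
have -> : x + T%:Z + 1 = (x + 1) + T%:Z by ring.
by rewrite !IH.
Qed.

Lemma periodic_mul T g : periodic T g -> forall (t : nat) x, g (x + (T * t)%:Z) = g x.
Proof.
move=> perg; elim=> [|t IH] x; first by rewrite muln0 addr0.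
have -> : x + (T * t.+1)%:Z = (x + (T * t)%:Z) + T%:Z by rewrite mulnS PoszD; ring.
by rewrite perg IH.
Qed.

Lemma fdiff_period N g x : periodic N.+1 g ->
  iter N.+1 fdiff g x = - \sum_(0 <= d < N) 'C(N.+1, d.+1)%:Z * iter d.+1 fdiff g x.
Proof.
move=> perg; have := newton_forward g x (ltnSn N.+1).
rewrite perg big_nat_recl // big_nat_recr //= bin0 binn !mul1r.
move=> newton_N; apply/eqP; rewrite -addr_eq0 addrC; apply/eqP.
by apply: (@addrI _ (g x)); rewrite addr0 -newton_N.
Qed.

Lemma dvdz_fdiff_pow p m j g : prime p -> periodic (p ^ m) g ->
  forall x, ((p ^ j)%:Z %| iter (j * p ^ m) fdiff g x)%Z.
Proof.
move=> pp; have [N Epm] : exists N, (p ^ m)%N = N.+1.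
  by exists (p ^ m).-1; rewrite prednK // expn_gt0 prime_gt0.
rewrite Epm.
elim: j g => [|j IH] g perg x; first by rewrite expn0 dvd1z.
rewrite mulSn iterD fdiff_period; last exact: periodic_fdiff.
rewrite rpredN big_mkord; apply: rpred_sum => d _.
rewrite expnS PoszM dvdz_mul //.
  by rewrite dvdzE -Epm prime_dvd_bin_pow // Epm !ltnS ltn_ord.
by rewrite -iterD addnC iterD; apply/IH/periodic_fdiff.
Qed.

Lemma newton_interp_nat p m k g : prime p -> periodic (p ^ m) g ->
  forall n : nat, ((p ^ k)%:Z %| g n%:Z -
     \sum_(0 <= d < k * p ^ m) iter d fdiff g 0 * binz n%:Z d)%Z.
Proof.
move=> pp perg n.
rewrite -[n%:Z]add0r (newton_forward _ _ (ltn_addl (k * p ^ m) (ltnSn n))) add0r.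
rewrite (big_cat_nat _ (n := k * p ^ m)) ?leq_addr //=.
under [X in _ - X]eq_bigr do rewrite binz_nat mulrC.
rewrite addrAC subrr add0r big_nat_cond; apply: rpred_sum => d /andP[/andP[le_kd _] _].
apply: dvdz_mull; rewrite -(subnKC le_kd) iterD.
exact/dvdz_fdiff_pow/periodic_fdiff.
Qed.

(* Newton interpolation modulo p^k on all integers: shift x by a large
   multiple of the period to a natural number, using binz_cong. *)
Lemma newton_interp p m k g : prime p -> periodic (p ^ m) g ->
  forall x, ((p ^ k)%:Z %| g x -
     \sum_(0 <= d < k * p ^ m) iter d fdiff g 0 * binz x d)%Z.
Proof.
move=> pp perg x; set D := (k * p ^ m)%N.
set y := x + (p ^ (m + (k + D)) * `|x|)%N%:Z.
have gy : g y = g x by rewrite /y expnD -mulnA periodic_mul.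
have [n yn] : exists n : nat, y = n%:Z.
  exists `|y|%N; rewrite /y; have : (0 < p ^ (m + (k + D)))%N by rewrite expn_gt0 prime_gt0.
  nia.
have binz_yx : ((p ^ k)%:Z %| \sum_(0 <= d < D) iter d fdiff g 0 * binz y d -
                              \sum_(0 <= d < D) iter d fdiff g 0 * binz x d)%Z.
  rewrite -sumrB big_mkord; apply: rpred_sum => d _; rewrite -mulrBr dvdz_mull //.
  apply: (binz_cong pp (ltnW (ltn_ord d))).
  rewrite /y addrC addKr addnC expnD mulnAC !PoszM.
  by apply: dvdz_mulr; apply: dvdz_mulr.
have := newton_interp_nat k pp perg n; rewrite -yn gy => interp_y.
by rewrite -(subrK (\sum_(0 <= d < D) iter d fdiff g 0 * binz y d) (g x)) -addrA rpredD.
Qed.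

Section Torsion.
Variable G : zmodType.
Implicit Types y : G.

Lemma mulrn_modn y g a b : y *+ g = 0 -> (a = b %[mod g])%N -> y *+ a = y *+ b.
Proof.
move=> yg Eab; rewrite (divn_eq a g) (divn_eq b g) Eab !mulrnDr.
by rewrite !(mulnC _ g) !mulrnA yg !mul0rn.
Qed.

Lemma mulrn_dvdn0 y a b : y *+ a = 0 -> (a %| b)%N -> y *+ b = 0.
Proof. by move=> ya /dvdnP [c ->]; rewrite mulnC mulrnA ya mul0rn. Qed.

Lemma mulrn_gcdn0 y a b : y *+ a = 0 -> y *+ b = 0 -> y *+ gcdn a b = 0.
Proof.
move=> ya yb; have [->|a_gt0] := posnP a; first by rewrite gcd0n.
have [u _ Eu] := Bezoutl b a_gt0.
by have := mulrn_dvdn0 ya Eu; rewrite mulrnDr mulnC mulrnA yb mul0rn addr0.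
Qed.

Lemma mulrz_cong y (c : nat) (z z' : int) :
  y *+ c = 0 -> (c%:Z %| z - z')%Z -> y *~ z = y *~ z'.
Proof.
move=> yc /dvdzP [w Ew]; have -> : z = z' + w * c%:Z by rewrite -Ew; ring.
by rewrite mulrzDr (mulrC w) mulrzA -pmulrn yc mul0rz addr0.
Qed.

End Torsion.

Lemma mulrn_card0 (A : finZmodType) (x : A) : x *+ #|A| = 0.
Proof. by rewrite -FinRing.zmodXgE -cardsT expg_cardG ?inE. Qed.

Lemma dvdz_prod_sub (I : finType) (a b : I -> int) (c : int) :
  (forall i, (c %| a i - b i)%Z) -> (c %| \prod_i a i - \prod_i b i)%Z.
Proof.
move=> cong_ab; apply: (big_ind2 (fun u v => (c %| u - v)%Z)) => // x1 x2 y1 y2 h1 h2.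
have -> : x1 * y1 - x2 * y2 = x1 * (y1 - y2) + (x1 - x2) * y2 by ring.
by apply: rpredD; [apply: dvdz_mull | apply: dvdz_mulr].
Qed.

Lemma partn_dvd_partnC (N p q : nat) : prime p -> prime q -> q != p ->
  (N`_q %| N`_p^')%N.
Proof.
move=> pp pq qp; have : (N`_q %| N`_p * N`_p^')%N.
  have [->|N_gt0] := posnP N; first by rewrite partn0 dvd1n.
  by rewrite partnC // dvdn_part.
by rewrite Gauss_dvdr // !p_part coprimeXl // coprimeXr // prime_coprime // dvdn_prime2.
Qed.

(* The Chinese-remainder idempotent e_p: e_p = 1 mod N_p and e_p = 0 mod N_p'.
   On a group killed by N, multiplication by e_p is the projection onto the
   p-primary component. *)
Definition chinese_idem (N p : nat) : nat := chinese (N`_p) (N`_p^') 1 0.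

Section PrimaryProjection.
Variables (G : zmodType) (N : nat).
Hypotheses (N_gt0 : (0 < N)%N) (GN : forall y : G, y *+ N = 0).
Implicit Types y : G.

Lemma chinese_idem1 (p : nat) : (chinese_idem N p = 1 %[mod N`_p])%N.
Proof. exact/chinese_modl/coprime_partC. Qed.

Lemma chinese_idem0 (p : nat) : (N`_p^' %| chinese_idem N p)%N.
Proof. by rewrite /dvdn chinese_modr ?mod0n // coprime_partC. Qed.

Lemma primary_part0 p y : prime p -> primary p y -> y *+ N`_p = 0.
Proof.
move=> pp [j yj]; apply: mulrn_dvdn0 (mulrn_gcdn0 yj (GN y)) _.
have /(dvdn_pfactor _ _ pp) [i _ Ei] := dvdn_gcdl (p ^ j) N.
have := dvdn_gcdr (p ^ j) N; rewrite Ei pfactor_dvdn // => le_i_log.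
by rewrite p_part dvdn_exp2l.
Qed.

Lemma primary_partC0 p q y : prime p -> prime q -> q != p -> primary q y ->
  y *+ N`_p^' = 0.
Proof.
move=> pp pq qp yq; apply: mulrn_dvdn0 (primary_part0 pq yq) _.
exact: partn_dvd_partnC.
Qed.

Lemma idem_torsion p y : prime p -> (y *+ chinese_idem N p) *+ p ^ logn p N = 0.
Proof.
move=> pp; rewrite -mulrnA -p_part; apply: mulrn_dvdn0 (GN y) _.
by rewrite -{1}(partnC p N_gt0) mulnC dvdn_mul ?chinese_idem0.
Qed.

Lemma idem_primary p y : prime p -> primary p (y *+ chinese_idem N p).
Proof. by move=> pp; exists (logn p N); apply: idem_torsion. Qed.

Lemma idem_id p y : prime p -> primary p y -> y *+ chinese_idem N p = y.
Proof.
by move=> pp yp; rewrite (mulrn_modn (primary_part0 pp yp) (chinese_idem1 p)).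
Qed.

Lemma idem_partC0 (p : nat) y : y *+ N`_p^' = 0 -> y *+ chinese_idem N p = 0.
Proof. by move=> y0; apply: mulrn_dvdn0 y0 (chinese_idem0 p). Qed.

Lemma idem_sum y : \sum_(p <- primes N) y *+ chinese_idem N p = y.
Proof.
rewrite sumrMnr -[RHS]mulr1n; apply: mulrn_modn (GN y) _.
apply/eqP/(modn_partP _ _ N_gt0) => q qN.
have pq : prime q by move: qN; rewrite mem_primes => /and3P[].
rewrite (bigD1_seq q) ?primes_uniq //= -modnDmr.
suff -> : ((\sum_(p <- primes N | p != q) chinese_idem N p) %% N`_q = 0)%N.
  by rewrite addn0 chinese_idem1.
apply/eqP; rewrite -/(dvdn _ _) big_seq_cond; apply: dvdn_sum => p /andP[pN pq'].
have pp : prime p by move: pN; rewrite mem_primes => /and3P[].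
by apply: dvdn_trans (partn_dvd_partnC _ pp pq _) (chinese_idem0 p); rewrite eq_sym.
Qed.

End PrimaryProjection.

Definition res_ind (T r : nat) (z : int) : int :=
  if (z %% T%:Z)%Z == r%:Z then 1 else 0.

Lemma res_ind_periodic T r : periodic T (res_ind T r).
Proof. by move=> z; rewrite /res_ind modzDr. Qed.

Section Polyfracts.
Variables (B : zmodType) (n : nat).
Implicit Types (P : polyfract B n) (G : ('I_n -> int) -> B).

Definition pf_repr G : Prop := exists P, forall x, pf_eval P x = G x.

Lemma pf_eval_cons t P x :
  pf_eval (t :: P) x = t.2 *~ (\prod_(j < n) binz (x j) (t.1 j)) + pf_eval P x.
Proof. by rewrite /pf_eval big_cons. Qed.

Lemma pf_eval_scale P c x :
  pf_eval [seq (t.1, t.2 *+ c) | t <- P] x = pf_eval P x *+ c.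
Proof.
rewrite /pf_eval big_map -sumrMnl; apply: eq_bigr => t _ /=.
by rewrite !pmulrn mulrzAC.
Qed.

Lemma pf_repr_sum (T : eqType) (s : seq T) (G : T -> ('I_n -> int) -> B) :
  (forall r, r \in s -> pf_repr (G r)) -> pf_repr (fun x => \sum_(r <- s) G r x).
Proof.
elim: s => [|r s IH] reprG; first by exists [::] => x; rewrite /pf_eval !big_nil.
have [P1 EP1] := reprG r (mem_head _ _).
have [|P2 EP2] := IH; first by move=> r' r's; apply: reprG; rewrite inE r's orbT.
by exists (P1 ++ P2) => x; rewrite /pf_eval big_cat -!/(pf_eval _ x) EP1 EP2 big_cons.
Qed.

(* A polyfract whose coefficients are killed by p^k is p^M-periodic in each
   variable for every large M, by p-adic continuity of the binomials. *)
Lemma pf_eval_periodic p k P : prime p -> (forall t, t \in P -> t.2 *+ p ^ k = 0) ->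
  exists M0, forall M x y, (M0 <= M)%N -> (forall j, ((p ^ M)%:Z %| x j - y j)%Z) ->
    pf_eval P x = pf_eval P y.
Proof.
move=> pp; elim: P => [|t P IH] torP; first by exists 0%N => M x y; rewrite /pf_eval !big_nil.
have [|M0 perP] := IH; first by move=> t' t'P; apply: torP; rewrite inE t'P orbT.
exists (maxn (k + \sum_(j < n) t.1 j) M0) => M x y; rewrite geq_max => /andP[le_kM le_M0M] cong_xy.
rewrite !pf_eval_cons (perP M x y le_M0M cong_xy); congr (_ + _).
apply: mulrz_cong (torP t (mem_head _ _)) _; apply: dvdz_prod_sub => j.
apply: (binz_cong pp (leqnn (t.1 j))); apply: dvdz_trans (cong_xy j).
rewrite dvdzE dvdn_exp2l //; apply: leq_trans le_kM.
by rewrite leq_add2l (bigD1 j) //= leq_addr.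
Qed.

(* A p^k-torsion multiple of a product of residue indicators modulo p^m is a
   polyfract: Newton interpolation of each indicator is exact modulo p^k. *)
Lemma pf_repr_res_ind p m k (b : B) (r : 'I_n -> nat) : prime p -> b *+ p ^ k = 0 ->
  pf_repr (fun x => b *~ \prod_j res_ind (p ^ m) (r j) (x j)).
Proof.
move=> pp bk; set D := (k * p ^ m)%N.
pose c (i d : nat) := iter d fdiff (res_ind (p ^ m) i) 0.
exists [seq ([ffun j => (d j : nat)], b *~ \prod_j c (r j) (d j))
         | d : {ffun 'I_n -> 'I_D} <- index_enum _] => x.
rewrite /pf_eval big_map.
transitivity (b *~ \prod_j \sum_(d < D) c (r j) d * binz (x j) d).
  rewrite bigA_distr_bigA mulrz_sumr; apply: eq_bigr => d _ /=.
  rewrite -mulrzA -big_split /=; congr (_ *~ _); apply: eq_bigr => j _.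
  by rewrite ffunE.
apply: mulrz_cong bk _; rewrite -opprB rpredN; apply: dvdz_prod_sub => j.
rewrite -(big_mkord xpredT (fun d => c (r j) d * binz (x j) d)).
exact/newton_interp/res_ind_periodic.
Qed.

Lemma periodic_res_decomp T G : (0 < T)%N ->
  (forall x y, (forall j, (T%:Z %| x j - y j)%Z) -> G x = G y) ->
  forall x, G x = \sum_(r : {ffun 'I_n -> 'I_T})
                    G (fun j => (r j : nat)%:Z) *~ \prod_j res_ind T (r j) (x j).
Proof.
move=> T_gt0 perG x.
pose a j := `|(x j %% T%:Z)%Z|%N.
have aE j : (a j)%:Z = (x j %% T%:Z)%Z by rewrite /a gez0_abs // modz_ge0 // eqz_nat -lt0n.
have lt_aT j : (a j < T)%N by rewrite -ltz_nat aE ltz_pmod.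
pose r0 : {ffun 'I_n -> 'I_T} := [ffun j => Ordinal (lt_aT j)].
rewrite (bigD1 r0) //= [X in _ + X]big1 ?addr0 => [|r r_r0].
  rewrite big1 ?mulr1z => [|j _]; last by rewrite /res_ind ffunE /= aE eqxx.
  apply: perG => j; rewrite ffunE /= aE; apply/dvdzP; exists (x j %/ T%:Z)%Z.
  by rewrite {1}(divz_eq (x j) T%:Z) addrK.
have /existsP [j r_j] : [exists j, r j != r0 j].
  apply: contraR r_r0 => /existsPn eq_r; apply/eqP/ffunP => j; apply/eqP/negPn/eq_r.
rewrite (bigD1 j) //= {1}/res_ind -aE eqz_nat.
suff /negbTE -> : a j != r j by rewrite mul0r mulr0z.
by apply: contra r_j => /eqP Ea; apply/eqP/val_inj; rewrite ffunE /= Ea.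
Qed.

Lemma pf_repr_periodic p m k G : prime p -> (forall x, G x *+ p ^ k = 0) ->
  (forall x y, (forall j, ((p ^ m)%:Z %| x j - y j)%Z) -> G x = G y) -> pf_repr G.
Proof.
move=> pp torG perG.
have [P EP] : pf_repr (fun x => \sum_(r : {ffun 'I_n -> 'I_(p ^ m)})
                    G (fun j => (r j : nat)%:Z) *~ \prod_j res_ind (p ^ m) (r j) (x j)).
  by apply: pf_repr_sum => r _; apply: pf_repr_res_ind.
by exists P => x; rewrite EP -periodic_res_decomp // expn_gt0 prime_gt0.
Qed.

End Polyfracts.

Lemma Zred_val k z : (val (Zred k z))%:Z = (z %% (k.+1)%:Z)%Z.
Proof. by rewrite /Zred /= -modz_nat gez0_abs ?modz_ge0 // modz_mod. Qed.

Lemma Zred_add k x y : Zred k (x + y) = Zred k x + Zred k y.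
Proof.
apply: val_inj; apply/eqP; rewrite -eqz_nat Zred_val /= -!modz_nat PoszD.
by rewrite -!modz_nat !gez0_abs ?modz_ge0 // !modz_mod modzDml modzDmr.
Qed.

Section Reduction.
Variables (A : zmodType) (n : nat) (q : 'I_n -> nat) (psi : Zprod q -> A).
Hypothesis psi_iso : is_group_iso psi.

Definition red_psi (x : 'I_n -> int) : A := psi (Zprod_red q x).

Lemma red_psi_ext x y : (forall j, x j = y j) -> red_psi x = red_psi y.
Proof. by move=> Exy; congr psi; apply/ffunP => j; rewrite !ffunE Exy. Qed.

Lemma red_psiD x y : red_psi (fun j => x j + y j) = red_psi x + red_psi y.
Proof.
by rewrite /red_psi -psi_iso.2; congr psi; apply/ffunP => j; rewrite !ffunE Zred_add.
Qed.

Lemma red_psiMz x z : red_psi (fun j => x j * z) = red_psi x *~ z.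
Proof.
have red_psi0 : red_psi (fun _ => 0) = 0.
  apply: (@addrI _ (red_psi (fun _ => 0))); rewrite addr0 -red_psiD.
  by apply: red_psi_ext => j; rewrite addr0.
elim/int_ind_shift: z => [|z]; first by rewrite mulr0z -red_psi0; apply: red_psi_ext => j; rewrite mulr0.
rewrite mulrzDr mulr1z (@red_psi_ext _ (fun j => x j * z + x j)) => [|j]; last by ring.
by rewrite (red_psiD (fun j => x j * z)); split=> [/addIr | ->].
Qed.

Lemma red_psi_surj a : exists x, red_psi x = a.
Proof.
have [[g psiK gK] _] := psi_iso.
exists (fun j => (g a j : nat)%:Z); rewrite /red_psi -[RHS]gK; congr psi.
apply/ffunP => j; rewrite ffunE; apply: val_inj; apply/eqP.
by rewrite -eqz_nat Zred_val modz_nat modn_small.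
Qed.

End Reduction.

Section Characterization.
Variables (A B : finZmodType).

Let N := (#|A| * #|B|)%N.
Let N_gt0 : (0 < N)%N.
Proof. by rewrite muln_gt0; apply/andP; split; apply/card_gt0P; exists 0. Qed.
Let AN (y : A) : y *+ N = 0. Proof. by rewrite /N mulrnA mulrn_card0 mul0rn. Qed.
Let BN (y : B) : y *+ N = 0. Proof. by rewrite /N mulnC mulrnA mulrn_card0 mul0rn. Qed.

(* The r-component of f only depends on the r-component of the argument:
   translating the argument by an r'-element does not change e_r f. *)
Definition primary_local (f : A -> B) : Prop :=
  forall r, prime r -> r \in primes N -> forall u t : A,
    t *+ N`_r^' = 0 -> f (u + t) *+ chinese_idem N r = f u *+ chinese_idem N r.

(* Local maps are product maps, with f_p = e_p f restricted to A_p. *)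
Lemma local_product_map f : primary_local f -> primary_product_map f.
Proof.
move=> locf; exists (fun p a => f a *+ chinese_idem N p); split.
  by move=> p a pp _; apply: (idem_primary N_gt0 BN).
move=> a a_prim; rewrite -[LHS](idem_sum N_gt0 BN) -/N.
rewrite big_seq [RHS]big_seq; apply: eq_bigr => r rN.
have pr : prime r by move: rN; rewrite mem_primes => /and3P[].
rewrite (bigD1_seq r) ?primes_uniq //= locf //.
rewrite big_seq_cond -sumrMnl big1 // => p /andP [pN pr'].
have pp : prime p by move: pN; rewrite mem_primes => /and3P[].
exact: (primary_partC0 N_gt0 AN pr pp pr' (a_prim p pp)).
Qed.

(* Conversely, for a product map e_r f(v) = f_r(e_r v), which ignores r'-parts. *)
Lemma product_map_local f : primary_product_map f -> primary_local f.
Proof.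
move=> [F [F_prim Ef]] r pr rN u t tr'.
have idem_f v : f v *+ chinese_idem N r = F r (v *+ chinese_idem N r).
  rewrite -{1}(idem_sum N_gt0 AN v) -/N Ef => [|p pp]; last exact: (idem_primary N_gt0 AN).
  rewrite -sumrMnl (bigD1_seq r) ?primes_uniq //= (idem_id N_gt0 BN) //;
    last exact/F_prim/(idem_primary N_gt0 AN).
  rewrite big_seq_cond big1 ?addr0 // => p /andP [pN pr'].
  have pp : prime p by move: pN; rewrite mem_primes => /and3P[].
  apply/idem_partC0/(primary_partC0 N_gt0 BN pr pp pr').
  exact/F_prim/(idem_primary N_gt0 AN).
by rewrite !idem_f mulrnDl (idem_partC0 tr') addr0.
Qed.

Variables (n : nat) (q : 'I_n -> nat) (psi : Zprod q -> A).
Hypothesis psi_iso : is_group_iso psi.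

(* A polyfract is p-adically continuous, and an r'-translation is an
   r^M-translation for every M, since N_r' is invertible modulo r^M. *)
Lemma polyfractal_local f : polyfractal psi f -> primary_local f.
Proof.
move=> [P EP] r pr _ u t tr'.
have [x <-] := red_psi_surj psi_iso u; have [y Ey] := red_psi_surj psi_iso t.
pose Pr := [seq (s.1, s.2 *+ chinese_idem N r) | s <- P].
have EPr z : pf_eval Pr z = f (red_psi psi z) *+ chinese_idem N r.
  by rewrite pf_eval_scale EP.
have torPr s : s \in Pr -> s.2 *+ r ^ logn r N = 0.
  by case/mapP=> s' _ ->; apply: (idem_torsion N_gt0 BN).
have [M0 perPr] := pf_eval_periodic pr torPr.
have /coprimezP [[al be] /= Bezout] : coprimez (N`_r^')%:Z (r ^ M0)%:Z.
  by rewrite coprimezE /= coprime_sym coprimeXl // prime_coprime // -p'natE // part_pnat.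
have -> : t = red_psi psi (fun j => y j * (be * (r ^ M0)%:Z)).
  rewrite (red_psiMz psi_iso) Ey.
  have -> : be * (r ^ M0)%:Z = 1 - al * (N`_r^')%:Z by rewrite -Bezout; ring.
  by rewrite mulrzBr mulr1z -mulrzA_C -pmulrn tr' mul0rz subr0.
rewrite -(red_psiD psi_iso) -!EPr; apply: perPr (leqnn _) _ => j.
have -> : x j + y j * (be * (r ^ M0)%:Z) - x j = (y j * be) * (r ^ M0)%:Z by ring.
exact: dvdz_mull.
Qed.

(* f = sum_r e_r f, and each e_r f (after reduction from Z^n) is
   r-power torsion and r^(v_r N)-periodic, hence a polyfract. *)
Lemma local_polyfractal f : primary_local f -> polyfractal psi f.
Proof.
move=> locf.
have [P EP] : pf_repr (fun x => \sum_(r <- primes N) f (red_psi psi x) *+ chinese_idem N r).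
  apply: pf_repr_sum => r rN; have pr : prime r by move: rN; rewrite mem_primes => /and3P[].
  apply: (@pf_repr_periodic _ _ r (logn r N) (logn r N)) => // [x | x y cong_xy].
    exact: (idem_torsion N_gt0 BN).
  pose w j := ((x j - y j) %/ (r ^ logn r N)%:Z)%Z.
  have -> : red_psi psi x = red_psi psi y + red_psi psi (fun j => w j * (r ^ logn r N)%:Z).
    by rewrite -(red_psiD psi_iso); apply: red_psi_ext => j; rewrite /w divzK //; ring.
  rewrite locf // (red_psiMz psi_iso) pmulrn -mulrzA -PoszM -p_part partnC //.
  by rewrite -pmulrn AN.
by exists P => x; rewrite EP (idem_sum N_gt0 BN).
Qed.

End Characterization.

Unset Implicit Arguments.
Theorem theorem3p17 (A B : finZmodType) (n : nat) (q : 'I_n -> nat)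
  (psi : Zprod q -> A) (Hpsi : is_group_iso psi) (f : A -> B) :
  polyfractal psi f <-> primary_product_map f.
Proof.
split=> [/(polyfractal_local Hpsi) | /product_map_local]; first exact: local_product_map.
exact: local_polyfractal.
Qed.
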